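(* Let $c=q_1^{a_1}\cdots q_\omega^{a_\omega}$ with $q_1,\dots,q_\omega$ distinct primes and $a_i\ge1$. If $a_i\ge 2$ for some $i$, then $E_c(q_i)=\frac{\varphi(c)}{q_i}$.
   Context: $\varphi$ is Euler's totient function. For a positive integer $c$ with distinct prime factors $q_1,\dots,q_\omega$ and real $x\ne 0$, $$E_c(x)=\sum_{S\subseteq\{1,\dots,\omega\}}(-1)^{|S|}\left\lfloor \frac{c}{x\prod_{j\in S}q_j}\right\rfloor.$$ *)

From HB Require Import structures.
From mathcomp Require Import all_boot all_order all_algebra.
Set Implicit Arguments. Unset Strict Implicit. Unset Printing Implicit Defensive.
Import Order.TTheory GRing.Theory Num.Theory.
Local Open Scope ring_scope.

Definition E (c : nat) (x : rat) : int :=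
  \sum_(S : {set 'I_(size (primes c))})
     (-1) ^+ #|S| *
     Num.floor ((c%:Q) / (x * \prod_(j in S) ((nth 0%N (primes c) j)%:Q))).

From HB Require Import structures.
From mathcomp Require Import all_boot all_order all_algebra.
From mathcomp Require Import ring.
Import Order.TTheory GRing.Theory Num.Theory.
Local Open Scope ring_scope.

(* Since q^2 divides c, every denominator q * prod_(j in S) q_j divides c, so no
   floor in E_c(q) rounds anything.  Hence E_c(q) = c/q * sum_S prod_(j in S) (-1/q_j)
   = c/q * prod_j (1 - 1/q_j), which is phi(c)/q by the product formula for phi. *)

Lemma prod_primes_logn (n : nat) :
  (0 < n)%N -> (\prod_(p <- primes n) p ^ logn p n)%N = n.
Proof.
move=> n_gt0; rewrite [RHS](prod_prime_decomp n_gt0) prime_decompE big_map.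
by apply: eq_bigr.
Qed.

Lemma dvdn_mul_prod_primes (n q : nat) :
  (1 < logn q n)%N -> (q * \prod_(p <- primes n) p %| n)%N.
Proof.
move=> lqn; have qn : q \in primes n by rewrite -logn_gt0 ltnW.
have n_gt0 : (0 < n)%N by case: n lqn {qn} => [|n]; rewrite ?logn0.
rewrite -{2}(prod_primes_logn _ n_gt0) !(big_rem q qn) /= mulnA mulnn.
rewrite dvdn_mul ?dvdn_exp2l // big_seq [X in (_ %| X)%N]big_seq.
apply: (big_rec2 (fun a b => a %| b)%N) => // p a b /mem_rem pn ab.
by rewrite dvdn_mul // -{1}[p]expn1 dvdn_exp2l // logn_gt0.
Qed.

Lemma dvdn_prod_nth_primes (n : nat) (S : {set 'I_(size (primes n))}) :
  (\prod_(j in S) nth 0 (primes n) j %| \prod_(p <- primes n) p)%N.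
Proof.
rewrite [X in (_ %| X)%N](big_nth 0%N) big_mkord.
by rewrite [X in (_ %| X)%N](bigID (mem S)) dvdn_mulr.
Qed.

Lemma floor_natf_div (R : archiNumFieldType) (m d : nat) :
  (d %| m)%N -> Num.floor (m%:R / d%:R : R) = (m %/ d)%:Z.
Proof. by move=> dm; rewrite -natf_div // pmulrn intrKfloor. Qed.

Lemma prod1D_sum_set (R : comPzRingType) (I : finType) (F : I -> R) :
  \prod_i (1 + F i) = \sum_(A : {set I}) \prod_(i in A) F i.
Proof.
under eq_bigr do rewrite addrC.
by rewrite bigA_distr; apply: eq_bigr => A _; rewrite -big_mkcond.
Qed.

Lemma natr_totient_pfactor (R : numFieldType) (p k : nat) :
  prime p -> (0 < k)%N ->
  (totient (p ^ k))%:R = (p ^ k)%:R * (1 - p%:R^-1) :> R.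
Proof.
move=> p_pr; case: k => // k _; rewrite totient_pfactor //=.
have p_neq0 : p%:R != 0 :> R by rewrite pnatr_eq0 -lt0n prime_gt0.
by rewrite natrM -subn1 natrB ?prime_gt0 // !natrX exprS; field.
Qed.

Lemma natr_totient (R : numFieldType) (n : nat) :
  (totient n)%:R = n%:R * \prod_(p <- primes n) (1 - p%:R^-1) :> R.
Proof.
case: (posnP n) => [-> | n_gt0]; first by rewrite mul0r.
rewrite totientE // -[X in X%:R * _](prod_primes_logn _ n_gt0) !natr_prod -big_split /=.
rewrite big_seq [RHS]big_seq; apply: eq_bigr => p pn.
have p_pr : prime p by move: pn; rewrite mem_primes => /andP[].
by rewrite -totient_pfactor ?logn_gt0 // natr_totient_pfactor ?logn_gt0.
Qed.

Lemma E_prod_primes (c q : nat) :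
  (q * \prod_(p <- primes c) p %| c)%N ->
  ((E c q%:Q)%:~R : rat) = c%:Q / q%:Q * \prod_(p <- primes c) (1 - p%:Q^-1).
Proof.
move=> qrad_c.
rewrite /E rmorph_sum [X in _ * X](big_nth 0%N) big_mkord prod1D_sum_set mulr_sumr.
apply: eq_bigr => S _.
have qS_c : (q * \prod_(j in S) nth 0 (primes c) j %| c)%N.
  exact: dvdn_trans (dvdn_mul (dvdnn q) (dvdn_prod_nth_primes _ S)) qrad_c.
rewrite -natr_prod -natrM floor_natf_div // rmorphM rmorphXn rmorphN1 /=.
rewrite -pmulrn natf_div // prodrN prodfV natrM natr_prod invfM; ring.
Qed.

Theorem lemma3 (c q : nat) :
  (0 < c)%N -> q \in primes c -> (2 <= logn q c)%N ->
  ((E c q%:Q)%:~R : rat) = (totient c)%:Q / q%:Q.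
Proof.
move=> _ _ lqc. (* the first two hypotheses follow from the third *)
by rewrite E_prod_primes ?dvdn_mul_prod_primes // -!pmulrn natr_totient mulrAC.
Qed.
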